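(* The categorization functor $cat:\mathbf{MdTop}\to\mathbf{Flow}$ is neither a left adjoint nor a right adjoint. In particular, it cannot be a left or a right Quillen equivalence.
   Context: Work in $\mathbf{Top}$, the category of $\Delta$-generated spaces (or $\Delta$-Hausdorff $\Delta$-generated spaces), cartesian closed; subsets carry the $\Delta$-kelleyfication of the relative topology. $\mathcal{G}(1,1)$ is the space of nondecreasing homeomorphisms $[0,1]\to[0,1]$. For paths $\gamma_1,\gamma_2$ on $[0,1]$ with $\gamma_1(1)=\gamma_2(0)$, $(\gamma_1*_N\gamma_2)(t)=\gamma_1(2t)$ for $t\le1/2$, $\gamma_2(2t-1)$ for $t\ge1/2$. A multipointed $d$-space $X=(|X|,X^0,\mathbb{P}^{\mathcal{G}}X)$ is a space $|X|$, a subset $X^0$ of states, and a set of continuous execution paths $[0,1]\to|X|$ with endpoints in $X^0$, stable under precomposition by $\mathcal{G}(1,1)$ and normalized composition; maps are continuous maps preserving states and execution paths; category $\mathbf{MdTop}$. $\mathbb{P}^{\mathcal{G}}_{\alpha,\beta}X$ (paths from $\alpha$ to $\beta$) is a subspace of the mapping space ${\rm TOP}([0,1],|X|)$. A flow $Y$ is a small semicategory enriched over $(\mathbf{Top},\times)$: a set $Y^0$ of states, spaces $\mathbb{P}_{\alpha,\beta}Y$, associative continuous compositions $\mathbb{P}_{\alpha,\beta}Y\times\mathbb{P}_{\beta,\gamma}Y\to\mathbb{P}_{\alpha,\gamma}Y$ (no identities); category $\mathbf{Flow}$. The categorization functor: $cat(X)$ has states $X^0$, $\mathbb{P}_{\alpha,\beta}cat(X)$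 the coequalizer of the two maps $\mathbb{P}^{\mathcal{G}}_{\alpha,\beta}X\times\mathcal{G}(1,1)\rightrightarrows\mathbb{P}^{\mathcal{G}}_{\alpha,\beta}X$, $(c,\phi)\mapsto c$ and $(c,\phi)\mapsto c\circ\phi$, and composition induced by normalized composition $*_N$. *)

From Stdlib Require Import Reals Lra ClassicalEpsilon Relation_Operators.
Open Scope R_scope.

Definition topology (T : Type) : Type := (T -> Prop) -> Prop.

Definition is_topology {T : Type} (O : topology T) : Prop :=
  O (fun _ => True) /\
  (forall U V, O U -> O V -> O (fun x => U x /\ V x)) /\
  (forall F : (T -> Prop) -> Prop, (forall U, F U -> O U) ->
     O (fun x => exists U, F U /\ U x)).

Definition continuous {A B : Type} (OA : topology A) (OB : topology B)
  (f : A -> B) : Prop := forall V, OB V -> OA (fun x => V (f x)).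

(* the cube [0,1]^n (homeomorphic to the topological n-simplex) *)
Definition cube (n : nat) : Type :=
  { x : nat -> R | (forall i, (i < n)%nat -> 0 <= x i <= 1) /\
                   (forall i, (n <= i)%nat -> x i = 0) }.

Definition cube_open (n : nat) : topology (cube n) := fun U =>
  forall x : cube n, U x -> exists e, 0 < e /\
    forall y : cube n,
      (forall i, (i < n)%nat -> Rabs (proj1_sig y i - proj1_sig x i) < e) -> U y.

Definition dgenerated {T : Type} (O : topology T) : Prop :=
  forall U : T -> Prop,
    (forall (n : nat) (f : cube n -> T),
        continuous (cube_open n) O f -> cube_open n (fun z => U (f z))) ->
    O U.

Record dspace := {
  dcar :> Type;
  dopen : topology dcar;
  dopen_top : is_topology dopen;
  dopen_dgen : dgenerated dopen }.

Definition I01 : Type := { t : R | 0 <= t <= 1 }.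

Definition I01_open : topology I01 := fun U =>
  forall t : I01, U t -> exists e, 0 < e /\
    forall s : I01, Rabs (proj1_sig s - proj1_sig t) < e -> U s.

Definition cubeI_open (n : nat) : topology (cube n * I01) := fun W =>
  forall p, W p -> exists e, 0 < e /\ forall q : cube n * I01,
    (forall i, (i < n)%nat ->
       Rabs (proj1_sig (fst q) i - proj1_sig (fst p) i) < e) ->
    Rabs (proj1_sig (snd q) - proj1_sig (snd p)) < e -> W q.

Definition I0 : I01. exists 0; lra. Defined.
Definition I1 : I01. exists 1; lra. Defined.

Definition clampI (x : R) : I01.
Proof.
  exists (Rmax 0 (Rmin 1 x)).
  unfold Rmax, Rmin; destruct (Rle_dec 1 x); destruct (Rle_dec 0 _); lra.
Defined.

Definition concatN {T : Type} (g1 g2 : I01 -> T) : I01 -> T := fun t =>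
  if Rle_dec (proj1_sig t) (1/2) then g1 (clampI (2 * proj1_sig t))
  else g2 (clampI (2 * proj1_sig t - 1)).

Definition G11 (phi : I01 -> I01) : Prop :=
  continuous I01_open I01_open phi /\
  (exists psi : I01 -> I01, continuous I01_open I01_open psi /\
     (forall t, psi (phi t) = t) /\ (forall t, phi (psi t) = t)) /\
  (forall s t, proj1_sig s <= proj1_sig t ->
               proj1_sig (phi s) <= proj1_sig (phi t)).

Record mdtop := {
  msp : dspace;
  mst : msp -> Prop;
  mpth : (I01 -> msp) -> Prop;
  mpth_cont : forall g, mpth g -> continuous I01_open (dopen msp) g;
  mpth_src : forall g, mpth g -> mst (g I0);
  mpth_tgt : forall g, mpth g -> mst (g I1);
  mpth_G11 : forall g phi, mpth g -> G11 phi -> mpth (fun t => g (phi t));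
  mpth_concat : forall g1 g2, mpth g1 -> mpth g2 -> g1 I1 = g2 I0 ->
                 mpth (concatN g1 g2) }.

Record mhom (X Y : mdtop) := {
  mfun :> msp X -> msp Y;
  mfun_cont : continuous (dopen (msp X)) (dopen (msp Y)) mfun;
  mfun_st : forall x, mst X x -> mst Y (mfun x);
  mfun_pth : forall g, mpth X g -> mpth Y (fun t => mfun (g t)) }.
Arguments mfun {X Y}.
Arguments mfun_st {X Y}.
Arguments mfun_pth {X Y}.
Arguments mfun_cont {X Y}.

Definition mid (X : mdtop) : mhom X X.
Proof.
  refine {| mfun := fun x => x |}.
  - intros V HV; exact HV.
  - intros x Hx; exact Hx.
  - intros g Hg; exact Hg.
Defined.

Definition mcompose {X Y Z : mdtop} (g : mhom Y Z) (f : mhom X Y) : mhom X Z.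
Proof.
  refine {| mfun := fun x => g (f x) |}.
  - intros V HV. exact (mfun_cont f _ (mfun_cont g V HV)).
  - intros x Hx. exact (mfun_st g _ (mfun_st f x Hx)).
  - intros h Hh. exact (mfun_pth g _ (mfun_pth f h Hh)).
Defined.

(* A flow is encoded by its set of states, the total space of execution
   paths P Y = disjoint sum of the P_{a,b} Y, source/target maps and the
   composition (only meaningful on composable pairs). *)
Record fdata := {
  fst_ : Type;
  fpth : Type;
  fsrc : fpth -> fst_;
  ftgt : fpth -> fst_;
  fopen : topology fpth;
  fcomp : fpth -> fpth -> fpth }.

Record flow := {
  fd :> fdata;
  fl_top : is_topology (fopen fd);
  fl_dgen : dgenerated (fopen fd);
  (* P Y is the topological sum of the P_{a,b} Y *)
  fl_fibre_open : forall a b, fopen fd (fun p => fsrc fd p = a /\ ftgt fd p = b);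
  fl_comp_src : forall p q, ftgt fd p = fsrc fd q -> fsrc fd (fcomp fd p q) = fsrc fd p;
  fl_comp_tgt : forall p q, ftgt fd p = fsrc fd q -> ftgt fd (fcomp fd p q) = ftgt fd q;
  fl_assoc : forall p q r, ftgt fd p = fsrc fd q -> ftgt fd q = fsrc fd r ->
     fcomp fd (fcomp fd p q) r = fcomp fd p (fcomp fd q r);
  (* continuity of P_{a,b} x P_{b,c} -> P_{a,c} (Delta-kelleyfied product) *)
  fl_comp_cont : forall n (f g : cube n -> fpth fd),
     continuous (cube_open n) (fopen fd) f ->
     continuous (cube_open n) (fopen fd) g ->
     (forall z, ftgt fd (f z) = fsrc fd (g z)) ->
     continuous (cube_open n) (fopen fd) (fun z => fcomp fd (f z) (g z)) }.

Record fhom (D D' : fdata) := {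
  hst : fst_ D -> fst_ D';
  hp : fpth D -> fpth D';
  hp_cont : continuous (fopen D) (fopen D') hp;
  hp_src : forall p, fsrc D' (hp p) = hst (fsrc D p);
  hp_tgt : forall p, ftgt D' (hp p) = hst (ftgt D p);
  hp_comp : forall p q, ftgt D p = fsrc D q ->
              hp (fcomp D p q) = fcomp D' (hp p) (hp q) }.
Arguments hst {D D'}.
Arguments hp {D D'}.
Arguments hp_cont {D D'}.
Arguments hp_src {D D'}.
Arguments hp_tgt {D D'}.
Arguments hp_comp {D D'}.

Definition fid (D : fdata) : fhom D D.
Proof.
  refine {| hst := fun x => x; hp := fun p => p |}.
  - intros V HV; exact HV.
  - intros p; reflexivity.
  - intros p; reflexivity.
  - intros p q _; reflexivity.
Defined.

Definition fcompose {D1 D2 D3 : fdata} (h : fhom D2 D3) (k : fhom D1 D2) : fhom D1 D3.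
Proof.
  refine {| hst := fun x => hst h (hst k x); hp := fun p => hp h (hp k p) |}.
  - intros V HV. exact (hp_cont k _ (hp_cont h V HV)).
  - intros p. rewrite hp_src, hp_src. reflexivity.
  - intros p. rewrite hp_tgt, hp_tgt. reflexivity.
  - intros p q e. rewrite (hp_comp k p q e). apply hp_comp.
    rewrite hp_tgt, hp_src, e. reflexivity.
Defined.

Definition Pst (X : mdtop) : Type := { x : msp X | mst X x }.
Definition Ppath (X : mdtop) : Type := { g : I01 -> msp X | mpth X g }.

Definition Psrc {X : mdtop} (g : Ppath X) : Pst X :=
  exist _ (proj1_sig g I0) (mpth_src X _ (proj2_sig g)).
Definition Ptgt {X : mdtop} (g : Ppath X) : Pst X :=
  exist _ (proj1_sig g I1) (mpth_tgt X _ (proj2_sig g)).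

(* topology of the sum over (a,b) of P^G_{a,b} X, each a Delta-kelleyfied
   subspace of TOP([0,1],|X|): final w.r.t. the maps from cubes landing in one
   P^G_{a,b} X whose adjoint cube n x [0,1] -> |X| is continuous *)
Definition PG_open (X : mdtop) : topology (Ppath X) := fun U =>
  forall (n : nat) (f : cube n -> Ppath X),
    (exists a b : msp X, forall z, proj1_sig (f z) I0 = a /\ proj1_sig (f z) I1 = b) ->
    continuous (cubeI_open n) (dopen (msp X))
      (fun p => proj1_sig (f (fst p)) (snd p)) ->
    cube_open n (fun z => U (f z)).

(* the relation identified by the coequalizer: c ~ c o phi *)
Definition reparR {X : mdtop} (g d : Ppath X) : Prop :=
  exists phi, G11 phi /\ forall t, proj1_sig d t = proj1_sig g (phi t).

Definition reparEq {X : mdtop} : Ppath X -> Ppath X -> Prop :=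
  clos_refl_sym_trans (Ppath X) reparR.

(* the underlying set of the coequalizer: equivalence classes *)
Definition Catp (X : mdtop) : Type :=
  { S : Ppath X -> Prop | exists g, S = reparEq g }.

Definition cls {X : mdtop} (g : Ppath X) : Catp X :=
  exist _ (reparEq g) (ex_intro _ g eq_refl).

Definition rep {X : mdtop} (S : Catp X) : Ppath X :=
  proj1_sig (constructive_indefinite_description _ (proj2_sig S)).

Definition cat_comp {X : mdtop} (S T : Catp X) : Catp X :=
  match excluded_middle_informative (proj1_sig (rep S) I1 = proj1_sig (rep T) I0) with
  | left e => cls (exist _ (concatN (proj1_sig (rep S)) (proj1_sig (rep T)))
                     (mpth_concat X _ _ (proj2_sig (rep S)) (proj2_sig (rep T)) e))
  | right _ => S
  end.

Definition cat (X : mdtop) : fdata := {|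
  fst_ := Pst X;
  fpth := Catp X;
  fsrc := fun S => Psrc (rep S);
  ftgt := fun S => Ptgt (rep S);
  fopen := fun V => PG_open X (fun g => V (cls g));
  fcomp := cat_comp |}.

Definition cat_st {X X' : mdtop} (g : mhom X X') (x : Pst X) : Pst X' :=
  exist _ (g (proj1_sig x)) (mfun_st g _ (proj2_sig x)).
Definition cat_pth {X X' : mdtop} (g : mhom X X') (S : Catp X) : Catp X' :=
  cls (exist _ (fun t => g (proj1_sig (rep S) t)) (mfun_pth g _ (proj2_sig (rep S)))).

Record functorFM := {
  Fob : flow -> mdtop;
  Fmap : forall Y Y' : flow, fhom Y Y' -> mhom (Fob Y) (Fob Y');
  Fmap_id : forall Y : flow, Fmap Y Y (fid Y) = mid (Fob Y);
  Fmap_comp : forall (Y1 Y2 Y3 : flow) (h : fhom Y2 Y3) (k : fhom Y1 Y2),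
      Fmap Y1 Y3 (fcompose h k) = mcompose (Fmap Y2 Y3 h) (Fmap Y1 Y2 k) }.

Definition cat_is_left_adjoint : Prop :=
  exists (G : functorFM)
    (Phi : forall (X : mdtop) (Y : flow), fhom (cat X) Y -> mhom X (Fob G Y))
    (Psi : forall (X : mdtop) (Y : flow), mhom X (Fob G Y) -> fhom (cat X) Y),
    (forall X Y h, Psi X Y (Phi X Y h) = h) /\
    (forall X Y k, Phi X Y (Psi X Y k) = k) /\
    (forall X (Y Y' : flow) (h : fhom Y Y') (k : fhom (cat X) Y),
        Phi X Y' (fcompose h k) = mcompose (Fmap G Y Y' h) (Phi X Y k)) /\
    (forall (X X' : mdtop) (Y : flow) (g : mhom X' X)
            (k : fhom (cat X) Y) (k' : fhom (cat X') Y),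
        (* k' = k o cat(g) *)
        (forall x, hst k' x = hst k (cat_st g x)) ->
        (forall S, hp k' S = hp k (cat_pth g S)) ->
        Phi X' Y k' = mcompose (Phi X Y k) g).

Definition cat_is_right_adjoint : Prop :=
  exists (F : functorFM)
    (Phi : forall (Y : flow) (X : mdtop), mhom (Fob F Y) X -> fhom Y (cat X))
    (Psi : forall (Y : flow) (X : mdtop), fhom Y (cat X) -> mhom (Fob F Y) X),
    (forall Y X m, Psi Y X (Phi Y X m) = m) /\
    (forall Y X k, Phi Y X (Psi Y X k) = k) /\
    (forall (Y Y' : flow) X (h : fhom Y' Y) (m : mhom (Fob F Y) X),
        Phi Y' X (mcompose m (Fmap F Y' Y h)) = fcompose (Phi Y X m) h) /\
    (forall (Y : flow) (X X' : mdtop) (g : mhom X X') (m : mhom (Fob F Y) X),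
        (* Phi (g o m) = cat(g) o Phi m *)
        (forall y, hst (Phi Y X' (mcompose g m)) y = cat_st g (hst (Phi Y X m) y)) /\
        (forall p, hp (Phi Y X' (mcompose g m)) p = cat_pth g (hp (Phi Y X m) p))).

(* Both halves test cat against the arrow flow (two states, one execution
   path between them).

   If cat had a right adjoint G, then Hom(X, G Y) would be the set |G Y| for
   the point X without states, while cat X is the empty flow; so every |G Y|
   would be a subsingleton and flow morphisms out of any cat X would be unique.
   But the point with one state has two morphisms to the arrow flow.

   If cat had a left adjoint F, morphisms from the arrow flow to cat X would be
   morphisms from F(arrow) to X, so cat would turn every jointly injective pair
   of maps out of X into a pair that is jointly injective on such morphisms.
   Take the two projections of the coarse plane: the diagonal path t |-> (t, t)
   and t |-> (t, phi t), with phi a nontrivial reparametrization, have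
   equivalent projections, yet they lie in different classes since only the
   first one stays on the diagonal. *)
From Stdlib Require Import Reals Lra Lia ClassicalEpsilon Relation_Operators
  FunctionalExtensionality PropExtensionality ProofIrrelevance.
Open Scope R_scope.

Lemma proj1_sig_inj {A : Type} {P : A -> Prop} (u v : sig P) :
  proj1_sig u = proj1_sig v -> u = v.
Proof. apply eq_sig_hprop; intros; apply proof_irrelevance. Qed.

Lemma fhom_ext {D D' : fdata} (h h' : fhom D D') :
  (forall x, hst h x = hst h' x) -> (forall p, hp h p = hp h' p) -> h = h'.
Proof.
  destruct h as [s p c es et ec], h' as [s' p' c' es' et' ec']; simpl.
  intros Es Ep.
  apply functional_extensionality in Es, Ep; subst.
  f_equal; apply proof_irrelevance.
Qed.

Lemma mhom_ext {X Y : mdtop} (m m' : mhom X Y) :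
  (forall x, m x = m' x) -> m = m'.
Proof.
  destruct m as [f c s p], m' as [f' c' s' p']; simpl; intros E.
  apply functional_extensionality in E; subst.
  f_equal; apply proof_irrelevance.
Qed.

Lemma cube_open_const (n : nat) (P : Prop) : cube_open n (fun _ => P).
Proof. intros x Hx. exists 1. split; [lra | intros; exact Hx]. Qed.

(* Final for all maps from cubes, continuous or not: every map into it is
   continuous and Delta-generation is immediate. *)
Definition cube_final_open (T : Type) : topology T := fun U =>
  forall n (f : cube n -> T), cube_open n (fun z => U (f z)).

Lemma cube_final_is_topology (T : Type) : is_topology (cube_final_open T).
Proof.
  split; [|split].
  - intros n f. apply cube_open_const.
  - intros U V HU HV n f x [Ux Vx].
    destruct (HU n f x Ux) as [e1 [He1 H1]], (HV n f x Vx) as [e2 [He2 H2]].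
    exists (Rmin e1 e2). split; [apply Rmin_pos; assumption|].
    pose proof (Rmin_l e1 e2); pose proof (Rmin_r e1 e2).
    intros y Hy. split.
    + apply H1. intros i Hi. specialize (Hy i Hi). lra.
    + apply H2. intros i Hi. specialize (Hy i Hi). lra.
  - intros F HF n f x [U [FU Ux]].
    destruct (HF U FU n f x Ux) as [e [He H]].
    exists e. split; [exact He|]. intros y Hy. exists U. split; auto.
Qed.

Lemma cube_final_dgenerated (T : Type) : dgenerated (cube_final_open T).
Proof. intros U HU n f. apply HU. intros V HV. exact (HV n f). Qed.

Definition cube_final_dspace (T : Type) : dspace := {|
  dcar := T;
  dopen := cube_final_open T;
  dopen_top := cube_final_is_topology T;
  dopen_dgen := cube_final_dgenerated T |}.

Lemma cube_final_open_const (T : Type) (P : Prop) : cube_final_open T (fun _ => P).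
Proof. intros n f. apply cube_open_const. Qed.

Lemma cube_final_continuous {A B : Type} (f : A -> B) :
  continuous (cube_final_open A) (cube_final_open B) f.
Proof. intros V HV n g. exact (HV n (fun z => f (g z))). Qed.

Lemma clampI_val (x : R) : 0 <= x <= 1 -> proj1_sig (clampI x) = x.
Proof.
  intros H. unfold clampI; simpl. unfold Rmax, Rmin.
  destruct (Rle_dec 1 x); destruct (Rle_dec 0 _); lra.
Qed.

Lemma clampI_proj1 (t : I01) : clampI (proj1_sig t) = t.
Proof. apply proj1_sig_inj, clampI_val, (proj2_sig t). Qed.

Definition cube1_of (t : I01) : cube 1.
Proof.
  exists (fun i => match i with O => proj1_sig t | _ => 0 end). split.
  - intros [|i] Hi; [destruct t; simpl; lra | lia].
  - intros [|i] Hi; [lia | reflexivity].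
Defined.

Lemma cube_final_path_continuous (T : Type) (g : I01 -> T) :
  continuous I01_open (cube_final_open T) g.
Proof.
  intros V HV t Vt.
  pose (f := fun z : cube 1 => g (clampI (proj1_sig z 0%nat))).
  assert (Vf : V (f (cube1_of t))) by (unfold f; simpl; rewrite clampI_proj1; exact Vt).
  destruct (HV 1%nat f (cube1_of t) Vf) as [e [He H]].
  exists e. split; [exact He|]. intros s Hs.
  specialize (H (cube1_of s)). unfold f in H; simpl in H. rewrite !clampI_proj1 in H.
  apply H. intros [|i] Hi; [exact Hs | lia].
Qed.

Lemma I01_lipschitz_continuous (h : I01 -> I01) (L : R) : 0 < L ->
  (forall s t, Rabs (proj1_sig (h s) - proj1_sig (h t))
               <= L * Rabs (proj1_sig s - proj1_sig t)) ->
  continuous I01_open I01_open h.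
Proof.
  intros HL Lip V HV t Vt. destruct (HV (h t) Vt) as [e [He H]].
  exists (e / L). split; [apply Rdiv_lt_0_compat; assumption|].
  intros s Hs. apply H.
  assert (L * Rabs (proj1_sig s - proj1_sig t) < L * (e / L))
    by (apply Rmult_lt_compat_l; assumption).
  replace (L * (e / L)) with e in * by (field; lra).
  specialize (Lip s t). lra.
Qed.

Lemma G11_I0 (phi : I01 -> I01) : G11 phi -> phi I0 = I0.
Proof.
  intros [_ [[psi [_ [_ phi_psi]]] mono]]. apply proj1_sig_inj.
  pose proof (proj2_sig (phi I0)); pose proof (proj2_sig (psi I0)).
  specialize (mono I0 (psi I0)). rewrite phi_psi in mono. simpl in *. lra.
Qed.

Lemma G11_I1 (phi : I01 -> I01) : G11 phi -> phi I1 = I1.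
Proof.
  intros [_ [[psi [_ [_ phi_psi]]] mono]]. apply proj1_sig_inj.
  pose proof (proj2_sig (phi I1)); pose proof (proj2_sig (psi I1)).
  specialize (mono (psi I1) I1). rewrite phi_psi in mono. simpl in *. lra.
Qed.

Lemma reparEq_endpoints {X : mdtop} (g d : Ppath X) : reparEq g d ->
  proj1_sig g I0 = proj1_sig d I0 /\ proj1_sig g I1 = proj1_sig d I1.
Proof.
  induction 1 as [g d [phi [Hphi E]] | | | ]; [| | intuition congruence ..].
  - rewrite !E, G11_I0, G11_I1 by exact Hphi. auto.
  - auto.
Qed.

Lemma reparEq_pointwise {X : mdtop} (P : msp X -> Prop) (g d : Ppath X) :
  reparEq g d -> (forall t, P (proj1_sig g t)) <-> (forall t, P (proj1_sig d t)).
Proof.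
  induction 1 as [g d [phi [Hphi E]] | | | ]; try tauto.
  destruct Hphi as [_ [[psi [_ [_ phi_psi]]] _]].
  split; intros Hg t.
  - rewrite E. apply Hg.
  - rewrite <- (phi_psi t), <- E. apply Hg.
Qed.

Lemma rep_cls {X : mdtop} (c : Ppath X) : reparEq c (rep (cls c)).
Proof.
  unfold rep. destruct (constructive_indefinite_description _ _) as [r Hr].
  simpl in *. rewrite Hr. apply rst_refl.
Qed.

Lemma cls_eq {X : mdtop} (g d : Ppath X) : reparEq g d -> cls g = cls d.
Proof.
  intros H. apply proj1_sig_inj. simpl. apply functional_extensionality. intros h.
  apply propositional_extensionality. split; intros H'.
  - exact (rst_trans _ _ _ _ _ (rst_sym _ _ _ _ H) H').
  - exact (rst_trans _ _ _ _ _ H H').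
Qed.

Lemma reparEq_of_cls_eq {X : mdtop} (g d : Ppath X) : cls g = cls d -> reparEq g d.
Proof.
  intros E. apply (f_equal (@proj1_sig _ _)) in E. simpl in E.
  rewrite E. apply rst_refl.
Qed.

Lemma fsrc_cat_cls {X : mdtop} (c : Ppath X) : fsrc (cat X) (cls c) = Psrc c.
Proof. apply proj1_sig_inj. symmetry. apply (reparEq_endpoints _ _ (rep_cls c)). Qed.

Lemma ftgt_cat_cls {X : mdtop} (c : Ppath X) : ftgt (cat X) (cls c) = Ptgt c.
Proof. apply proj1_sig_inj. symmetry. apply (reparEq_endpoints _ _ (rep_cls c)). Qed.

Lemma Catp_pathless (X : mdtop) : (forall g, ~ mpth X g) -> Catp X -> False.
Proof. intros nopath [S [[g Hg] _]]. exact (nopath g Hg). Qed.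

Definition Ppath_map {X X' : mdtop} (m : mhom X X') (g : Ppath X) : Ppath X' :=
  exist _ (fun t => m (proj1_sig g t)) (mfun_pth m _ (proj2_sig g)).

Lemma reparEq_map {X X' : mdtop} (m : mhom X X') (g d : Ppath X) :
  reparEq g d -> reparEq (Ppath_map m g) (Ppath_map m d).
Proof.
  induction 1 as [g d [phi [Hphi E]] | | | ].
  - apply rst_step. exists phi. split; [exact Hphi|]. intros t. simpl. rewrite E. reflexivity.
  - apply rst_refl.
  - apply rst_sym; assumption.
  - eapply rst_trans; eassumption.
Qed.

Lemma cat_pth_cls {X X' : mdtop} (m : mhom X X') (c : Ppath X) :
  cat_pth m (cls c) = cls (Ppath_map m c).
Proof. apply cls_eq, rst_sym, (reparEq_map m c (rep (cls c))), rep_cls. Qed.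

Definition arrow_fdata : fdata := {|
  fst_ := bool;
  fpth := unit;
  fsrc := fun _ => false;
  ftgt := fun _ => true;
  fopen := cube_final_open unit;
  fcomp := fun p _ => p |}.

Definition arrow_flow : flow.
Proof.
  refine {| fd := arrow_fdata |}; simpl.
  - apply cube_final_is_topology.
  - apply cube_final_dgenerated.
  - intros; apply cube_final_open_const.
  - discriminate.
  - discriminate.
  - discriminate.
  - intros n f g Hf _ _. exact Hf.
Defined.

Definition arrow_to_cat {X : mdtop} (c : Ppath X) : fhom arrow_flow (cat X).
Proof.
  refine (Build_fhom arrow_flow (cat X)
            (fun b => if b then Ptgt c else Psrc c) (fun _ => cls c) _ _ _ _).
  - intros V _. apply cube_final_open_const.
  - intros p. apply fsrc_cat_cls.
  - intros p. apply ftgt_cat_cls.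
  - discriminate.
Defined.

Definition mpoint (st : Prop) : mdtop.
Proof.
  refine {| msp := cube_final_dspace unit; mst := fun _ => st; mpth := fun _ => False |};
  contradiction.
Defined.

Definition mpoint_hom (Z : mdtop) (u : msp Z) : mhom (mpoint False) Z.
Proof.
  refine {| mfun := fun _ => u |}; [|contradiction..].
  intros V _. apply cube_final_open_const.
Defined.

Lemma fhom_from_cat_stateless (X : mdtop) (D : fdata) (h h' : fhom (cat X) D) :
  (forall x, ~ mst X x) -> h = h'.
Proof.
  intros nostate.
  assert (nopath : Catp X -> False)
    by (apply Catp_pathless; intros g Hg; exact (nostate _ (mpth_src X g Hg))).
  apply fhom_ext.
  - intros [x Hx]. destruct (nostate x Hx).
  - intros p. destruct (nopath p).
Qed.

Lemma cat_left_adjoint_fhom_unique : cat_is_left_adjoint ->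
  forall (X : mdtop) (Y : flow) (k k' : fhom (cat X) Y), k = k'.
Proof.
  intros [G [Phi [Psi [PsiPhi [PhiPsi _]]]]] X Y k k'.
  assert (GY_subsingleton : forall u v : msp (Fob G Y), u = v).
  { intros u v.
    assert (E : mpoint_hom _ u = mpoint_hom _ v).
    { rewrite <- (PhiPsi _ Y (mpoint_hom _ u)), <- (PhiPsi _ Y (mpoint_hom _ v)).
      f_equal. apply fhom_from_cat_stateless. simpl. tauto. }
    exact (f_equal (fun m : mhom (mpoint False) (Fob G Y) => m tt) E). }
  rewrite <- (PsiPhi X Y k), <- (PsiPhi X Y k'). f_equal.
  apply mhom_ext. intros; apply GY_subsingleton.
Qed.

Definition state_to_arrow (b : bool) : fhom (cat (mpoint True)) arrow_flow.
Proof.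
  assert (nopath : Catp (mpoint True) -> False)
    by (apply Catp_pathless; simpl; tauto).
  refine (Build_fhom (cat (mpoint True)) arrow_flow (fun _ => b) (fun _ => tt) _ _ _ _);
    try (intros p; destruct (nopath p)).
  intros V _ n f _ _. apply cube_open_const.
Defined.

Lemma not_left_adjoint : ~ cat_is_left_adjoint.
Proof.
  intros Hleft.
  pose proof (cat_left_adjoint_fhom_unique Hleft _ _ (state_to_arrow true) (state_to_arrow false))
    as E.
  apply (f_equal (fun h : fhom (cat (mpoint True)) arrow_flow =>
                   hst h (exist _ tt I : Pst (mpoint True)))) in E.
  discriminate E.
Qed.

Lemma cat_right_adjoint_jointly_monic : cat_is_right_adjoint ->
  forall (Y : flow) (X Q : mdtop) (p1 p2 : mhom X Q),
  (forall x x', p1 x = p1 x' -> p2 x = p2 x' -> x = x') ->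
  forall k k' : fhom Y (cat X),
  (forall y, hst k y = hst k' y) ->
  (forall p, cat_pth p1 (hp k p) = cat_pth p1 (hp k' p)) ->
  (forall p, cat_pth p2 (hp k p) = cat_pth p2 (hp k' p)) ->
  k = k'.
Proof.
  intros [F [Phi [Psi [PsiPhi [PhiPsi [_ natural]]]]]]
    Y X Q p1 p2 joint k k' Est Ep1 Ep2.
  assert (Eproj : forall pi : mhom X Q,
             (forall p, cat_pth pi (hp k p) = cat_pth pi (hp k' p)) ->
             mcompose pi (Psi Y X k) = mcompose pi (Psi Y X k')).
  { intros pi Epi.
    rewrite <- (PsiPhi Y Q (mcompose pi (Psi Y X k))),
            <- (PsiPhi Y Q (mcompose pi (Psi Y X k'))).
    f_equal.
    destruct (natural Y X Q pi (Psi Y X k)) as [Nst Np],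
             (natural Y X Q pi (Psi Y X k')) as [Nst' Np'].
    apply fhom_ext; intros.
    - rewrite Nst, Nst', !PhiPsi, Est. reflexivity.
    - rewrite Np, Np', !PhiPsi. apply Epi. }
  rewrite <- (PhiPsi Y X k), <- (PhiPsi Y X k'). f_equal.
  apply mhom_ext. intros x. apply joint.
  - exact (f_equal (fun m : mhom (Fob F Y) Q => m x) (Eproj p1 Ep1)).
  - exact (f_equal (fun m : mhom (Fob F Y) Q => m x) (Eproj p2 Ep2)).
Qed.

Definition mcoarse (T : Type) : mdtop := {|
  msp := cube_final_dspace T;
  mst := fun _ => True;
  mpth := fun _ => True;
  mpth_cont := fun g _ => cube_final_path_continuous T g;
  mpth_src := fun _ _ => I;
  mpth_tgt := fun _ _ => I;
  mpth_G11 := fun _ _ _ _ => I;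
  mpth_concat := fun _ _ _ _ _ => I |}.

Definition mcoarse_map {A B : Type} (f : A -> B) : mhom (mcoarse A) (mcoarse B) :=
  Build_mhom (mcoarse A) (mcoarse B) f (cube_final_continuous f)
    (fun _ _ => I) (fun _ _ => I).

Definition mcoarse_path {T : Type} (g : I01 -> T) : Ppath (mcoarse T) := exist _ g I.

Definition bend (t : R) : R := if Rle_dec t (1/2) then t / 2 else (3 * t - 1) / 2.
Definition unbend (u : R) : R := if Rle_dec u (1/4) then 2 * u else (2 * u + 1) / 3.

Definition bendI (t : I01) : I01 := clampI (bend (proj1_sig t)).
Definition unbendI (u : I01) : I01 := clampI (unbend (proj1_sig u)).

Lemma bendI_val (t : I01) : proj1_sig (bendI t) = bend (proj1_sig t).
Proof. apply clampI_val. destruct t as [t Ht]; simpl. unfold bend; destruct Rle_dec; lra. Qed.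

Lemma unbendI_val (u : I01) : proj1_sig (unbendI u) = unbend (proj1_sig u).
Proof. apply clampI_val. destruct u as [u Hu]; simpl. unfold unbend; destruct Rle_dec; lra. Qed.

Ltac case_Rabs := unfold Rabs; repeat destruct Rcase_abs; lra.

Lemma G11_bendI : G11 bendI.
Proof.
  split; [|split].
  - apply (I01_lipschitz_continuous _ 2); [lra|]. intros s t. rewrite !bendI_val.
    unfold bend; destruct (Rle_dec (proj1_sig s) _), (Rle_dec (proj1_sig t) _); case_Rabs.
  - exists unbendI. split; [|split].
    + apply (I01_lipschitz_continuous _ 2); [lra|]. intros s t. rewrite !unbendI_val.
      unfold unbend; destruct (Rle_dec (proj1_sig s) _), (Rle_dec (proj1_sig t) _); case_Rabs.
    + intros t. apply proj1_sig_inj. rewrite unbendI_val, bendI_val.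
      unfold unbend, bend; destruct (Rle_dec (proj1_sig t) _), (Rle_dec _ (1/4)); lra.
    + intros u. apply proj1_sig_inj. rewrite bendI_val, unbendI_val.
      unfold unbend, bend; destruct (Rle_dec (proj1_sig u) _), (Rle_dec _ (1/2)); lra.
  - intros s t Hst. rewrite !bendI_val.
    unfold bend; destruct (Rle_dec (proj1_sig s) _), (Rle_dec (proj1_sig t) _); lra.
Qed.

Definition Ihalf : I01.
Proof. exists (1/2). lra. Defined.

Lemma bendI_half : proj1_sig (bendI Ihalf) <> 1/2.
Proof. rewrite bendI_val. simpl. unfold bend; destruct Rle_dec; lra. Qed.

Definition diagonal_path : Ppath (mcoarse (R * R)) :=
  mcoarse_path (fun t => (proj1_sig t, proj1_sig t)).
Definition bent_path : Ppath (mcoarse (R * R)) :=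
  mcoarse_path (fun t => (proj1_sig t, proj1_sig (bendI t))).

Lemma not_right_adjoint : ~ cat_is_right_adjoint.
Proof.
  intros Hright.
  assert (E : arrow_to_cat diagonal_path = arrow_to_cat bent_path).
  { apply (cat_right_adjoint_jointly_monic Hright _ _ _ (mcoarse_map fst) (mcoarse_map snd)).
    - intros [x y] [x' y']; simpl. congruence.
    - intros [|]; apply proj1_sig_inj; cbn -[bendI];
        [rewrite (G11_I1 _ G11_bendI) | rewrite (G11_I0 _ G11_bendI)]; reflexivity.
    - intros p. simpl. rewrite !cat_pth_cls. reflexivity.
    - intros p. simpl. rewrite !cat_pth_cls. apply cls_eq, rst_step.
      exists bendI. split; [exact G11_bendI | reflexivity]. }
  apply (f_equal (fun h : fhom arrow_flow (cat (mcoarse (R * R))) => hp h tt)) in E.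
  simpl in E.
  apply reparEq_of_cls_eq in E.
  apply bendI_half. symmetry.
  exact (proj1 (reparEq_pointwise (X := mcoarse (R * R)) (fun x => fst x = snd x) _ _ E)
           (fun _ => eq_refl) Ihalf).
Qed.

Theorem theorem8p8 : ~ cat_is_left_adjoint /\ ~ cat_is_right_adjoint.
Proof. split; [exact not_left_adjoint | exact not_right_adjoint]. Qed.
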